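(* Let $r:\mathfrak h^*\to\wedge^2\mathfrak g$ be a smooth map and let $\Lambda=\sum_{i=1}^l h_i\wedge\frac{\partial}{\partial\lambda^i}+r(\lambda)\in\Gamma(\wedge^2A)$, where $A=T\mathfrak h^*\times\mathfrak g$ is the product Lie algebroid described in the context. Then $r$ is a triangular dynamical $r$-matrix if and only if $[\Lambda,\Lambda]=0$ (Schouten bracket of the Lie algebroid $A$), i.e. if and only if $(A,\Lambda)$ defines a triangular Lie bialgebroid $(A,A^* )$, the Lie algebroid structure on $A^*$ being the one whose differential on $\Gamma(\wedge^\bullet A)$ is $d_*=[\Lambda,\cdot\,]$.
   Context: Let $\mathfrak g$ be a finite-dimensional real Lie algebra and $\mathfrak h\subset\mathfrak g$ an abelian Lie subalgebra of dimension $l$ with basis $h_1,\dots,h_l$; let $(\lambda^1,\dots,\lambda^l)$ be the induced linear coordinates on $\mathfrak h^*$. A triangular dynamical $r$-matrix is a smooth map $r:\mathfrak h^*\to\wedge^2\mathfrak g$ such that (a) (zero weight) $[h,r(\lambda)]=0$ for all $h\in\mathfrak h$, $\lambda\in\mathfrak h^*$, where $\mathfrak g$ acts on $\wedge^2\mathfrak g$ by the adjoint action, and (b) (classical dynamical Yang–Baxter equation) $\sum_i h_i\wedge\frac{\partial r}{\partial\lambda^i}+\frac12[r,r]=0$, where $[\cdot,\cdot]:\wedge^k\mathfrak g\otimes\wedge^m\mathfrak g\to\wedge^{k+m-1}\mathfrak g$ is the Schouten-type bracket extending the Lie bracket of $\mathfrak g$. The product Lie algebroid $A=T\mathfrak h^*\times\mathfrak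 g$ over $\mathfrak h^*$ has sections $(X,f)$ with $X$ a vector field on $\mathfrak h^*$ and $f:\mathfrak h^*\to\mathfrak g$ smooth, bracket $[(X,f),(Y,g)]=([X,Y],X(g)-Y(f)+[f,g])$ and anchor the projection $(X,f)\mapsto X$; the bracket extends to a Schouten bracket on $\Gamma(\wedge^\bullet A)$. *)

From HB Require Import structures.
From mathcomp Require Import all_boot all_order all_algebra.
From mathcomp Require Import all_classical all_reals all_analysis.
Import Order.TTheory GRing.Theory Num.Theory.
Import numFieldNormedType.Exports.

Set Implicit Arguments.
Unset Strict Implicit.
Unset Printing Implicit Defensive.

Local Open Scope ring_scope.

(* A finite-dimensional real Lie algebra g of dimension n is given by its   *)
(* structure constants c in a basis e_1..e_n : [e_a, e_b] = sum_k c a b k e_k.*)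
(* Multivectors over a space with basis indexed by a finType I are stored by *)
(* their components, i.e. their values on tuples of dual basis vectors        *)
(* (determinant pairing): a bivector B = 1/2 sum B^{ab} e_a/\e_b is stored   *)
(* as the antisymmetric array B a b ; a trivector likewise as a totally      *)
(* antisymmetric 3-array.                                                    *)

Section Multivectors.
Variables (R : ringType) (I : finType).

Definition wedge2 (u v : I -> R) : I -> I -> R :=
  fun a b => u a * v b - u b * v a.

(* components of sum_{k,b,d} M^{kbd} e_k /\ e_b /\ e_d *)
Definition alt3 (M : I -> I -> I -> R) : I -> I -> I -> R :=
  fun p q s => M p q s + M q s p + M s p q - M q p s - M p s q - M s q p.

Definition wedge12 (u : I -> R) (B : I -> I -> R) : I -> I -> I -> R :=
  fun p q s => u p * B q s + u q * B s p + u s * B p q.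

End Multivectors.

Section LieAlgebra.
Variables (R : ringType) (n : nat).
Implicit Types (c : 'I_n -> 'I_n -> 'I_n -> R).

Definition basis_vec (k : 'I_n) : 'I_n -> R := fun j => (j == k)%:R.

Definition lie_br c (u v : 'I_n -> R) : 'I_n -> R :=
  fun k => \sum_(a < n) \sum_(b < n) u a * v b * c a b k.

Definition is_lie_algebra c : Prop :=
  (forall a b k, c a b k = - c b a k) /\
  (forall a b d m, \sum_(k < n) (c a b k * c k d m + c b d k * c k a m
                                 + c d a k * c k b m) = 0).

(* adjoint action of h in g on a bivector B in wedge^2 g :
   ad_h (x /\ y) = [h,x] /\ y + x /\ [h,y] *)
Definition ad_biv c (h : 'I_n -> R) (B : 'I_n -> 'I_n -> R) : 'I_n -> 'I_n -> R :=
  fun a b => \sum_(k < n) lie_br c h (basis_vec k) a * B k b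
           + \sum_(k < n) B a k * lie_br c h (basis_vec k) b.

(* Schouten bracket wedge^2 g x wedge^2 g -> wedge^3 g extending the Lie
   bracket: [P,Q] = sum_{a,b,c,d} P^{ab} Q^{cd} [e_a,e_c] /\ e_b /\ e_d *)
Definition lie_schouten c (P Q : 'I_n -> 'I_n -> R) : 'I_n -> 'I_n -> 'I_n -> R :=
  alt3 (fun k b d => \sum_(a < n) \sum_(a' < n) P a b * Q a' d * c a a' k).

End LieAlgebra.

Section Analysis.
Variables (R : realType) (l : nat).

(* coordinate vector field d/d lambda^i on h^* = R^l (coordinates lambda^i
   induced by the basis h_1..h_l of h) *)
Definition partial (i : 'I_l) (f : 'rV[R]_l -> R) : 'rV[R]_l -> R :=
  fun x => 'D_(delta_mx 0 i) f x.

Definition iter_derive (vs : seq 'rV[R]_l) (f : 'rV[R]_l -> R) : 'rV[R]_l -> R :=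
  foldr (fun v g => fun x => 'D_v g x) f vs.

Definition smooth (f : 'rV[R]_l -> R) : Prop :=
  forall (vs : seq 'rV[R]_l) (x : 'rV[R]_l), differentiable (iter_derive vs f) x.

End Analysis.

Section DynamicalRMatrix.
Variables (R : realType) (n l : nat).
Variables (c : 'I_n -> 'I_n -> 'I_n -> R) (hv : 'I_l -> 'I_n -> R).

Definition abelian_subalgebra_basis : Prop :=
  (forall x : 'I_l -> R, (forall a, \sum_(i < l) x i * hv i a = 0) ->
      forall i, x i = 0) /\
  (forall i j k, lie_br c (hv i) (hv j) k = 0).

Definition smooth_biv (r : 'rV[R]_l -> 'I_n -> 'I_n -> R) : Prop :=
  (forall x a b, r x a b = - r x b a) /\ (forall a b, smooth (fun x => r x a b)).

Definition zero_weight (r : 'rV[R]_l -> 'I_n -> 'I_n -> R) : Prop :=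
  forall (y : 'I_l -> R) (x : 'rV[R]_l) a b,
    ad_biv c (fun k => \sum_(i < l) y i * hv i k) (r x) a b = 0.

Definition CDYBE (r : 'rV[R]_l -> 'I_n -> 'I_n -> R) : Prop :=
  forall (x : 'rV[R]_l) p q s,
    \sum_(i < l) wedge12 (hv i) (fun a b => partial i (fun y => r y a b) x) p q s
    + 2^-1 * lie_schouten c (r x) (r x) p q s = 0.

Definition triangular_dynamical_r_matrix (r : 'rV[R]_l -> 'I_n -> 'I_n -> R) : Prop :=
  smooth_biv r /\ zero_weight r /\ CDYBE r.

(* Global frame of A indexed by 'I_l + 'I_n :
   inl i = d/d lambda^i (a vector field), inr a = e_a (constant g-section). *)
Definition Aidx := ('I_l + 'I_n)%type.

(* structure functions of the bracket of A in this frame: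
   [d_i, d_j] = 0, [d_i, e_a] = 0, [e_a, e_b] = sum_k c a b k e_k *)
Definition A_struct (al be ga : Aidx) : R :=
  match al, be, ga with
  | inr a, inr b, inr k => c a b k
  | _, _, _ => 0
  end.

Definition A_anchor (al : Aidx) (f : 'rV[R]_l -> R) : 'rV[R]_l -> R :=
  match al with
  | inl i => partial i f
  | inr _ => fun _ => 0
  end.

(* Schouten bracket of A on bivector sections P = 1/2 sum P^{ab} E_a/\E_b,
   Q likewise (components functions of lambda).  Obtained by expanding with
   R-bilinearity, [X,f] = anchor(X) f, [E_a,E_b] = C_{ab}^g E_g and the
   graded Leibniz rule:
   [P,Q] = sum P^{ab}Q^{gd} C_{ag}^e E_e/\E_b/\E_d
         + 1/2 sum P^{ab} rho_a(Q^{gd}) E_g/\E_b/\E_d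
         - 1/2 sum Q^{gd} rho_g(P^{ab}) E_a/\E_b/\E_d. *)
Definition A_schouten (P Q : 'rV[R]_l -> Aidx -> Aidx -> R)
  : 'rV[R]_l -> Aidx -> Aidx -> Aidx -> R :=
  fun x => alt3 (fun e b d =>
      \sum_(al : Aidx) \sum_(ga : Aidx) P x al b * Q x ga d * A_struct al ga e
    + 2^-1 * \sum_(al : Aidx) P x al b * A_anchor al (fun y => Q y e d) x
    - 2^-1 * \sum_(ga : Aidx) Q x ga d * A_anchor ga (fun y => P y e b) x).

Definition secA_g (u : 'I_n -> R) : Aidx -> R :=
  fun al => match al with inr a => u a | inl _ => 0 end.
Definition secA_T (i : 'I_l) : Aidx -> R :=
  fun al => match al with inl j => (j == i)%:R | inr _ => 0 end.
Definition bivA_g (B : 'I_n -> 'I_n -> R) : Aidx -> Aidx -> R :=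
  fun al be => match al, be with inr a, inr b => B a b | _, _ => 0 end.

Definition Lambda (r : 'rV[R]_l -> 'I_n -> 'I_n -> R) : 'rV[R]_l -> Aidx -> Aidx -> R :=
  fun x al be => \sum_(i < l) wedge2 (secA_g (hv i)) (secA_T i) al be
                 + bivA_g (r x) al be.

End DynamicalRMatrix.

(* In the frame (d/dlambda^i, e_a) of A the bivector Lambda has constant
   mixed components (+/- h_i) and g-components r, and the anchor only sees
   the d/dlambda^i.  Reading off the components of [Lambda, Lambda]:
   - with three g-indices one gets twice the left-hand side of the CDYBE;
   - with one index d/dlambda^j and two g-indices one gets -2 ad_{h_j} r,
     which vanishes for all j exactly when r has zero weight;
   - with two indices d/dlambda^i, d/dlambda^j one gets 2 [h_i, h_j] = 0,
     and with three such indices 0.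
   By antisymmetry of the components this covers every component. *)

From mathcomp Require Import all_boot all_order all_algebra.
From mathcomp Require Import all_classical all_reals all_analysis.
From mathcomp Require Import ring.
Import GRing.Theory Num.Theory.

Set Implicit Arguments.
Unset Strict Implicit.
Unset Printing Implicit Defensive.

Local Open Scope ring_scope.

Section Alt3.
Variables (R : comRingType) (I : finType).
Implicit Types (A B : I -> I -> I -> R).

Lemma eq_alt3 A B :
  (forall e b d, A e b d = B e b d) -> forall p q s, alt3 A p q s = alt3 B p q s.
Proof. by move=> eqAB p q s; rewrite /alt3 !eqAB. Qed.

Lemma alt3D A B p q s :
  alt3 (fun e b d => A e b d + B e b d) p q s = alt3 A p q s + alt3 B p q s.
Proof. by rewrite /alt3; ring. Qed.

Lemma alt3Z (a : R) A p q s :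
  alt3 (fun e b d => a * A e b d) p q s = a * alt3 A p q s.
Proof. by rewrite /alt3; ring. Qed.

Lemma alt3_sum (J : finType) (F : J -> I -> I -> I -> R) p q s :
  alt3 (fun e b d => \sum_j F j e b d) p q s = \sum_j alt3 (F j) p q s.
Proof. by rewrite /alt3 !sumrB !big_split. Qed.

Lemma alt3_cycle A p q s : alt3 A p q s = alt3 A q s p.
Proof. by rewrite /alt3; ring. Qed.

Lemma alt3_wedge12 (h : I -> R) (D : I -> I -> R) p q s :
  (forall a b, D a b = - D b a) ->
  alt3 (fun k b d => h d * D k b - h b * D k d) p q s = 4 * wedge12 h D p q s.
Proof.
by move=> Danti; rewrite /alt3 /wedge12 (Danti q p) (Danti s q) (Danti p s); ring.
Qed.

End Alt3.

Section LieBracket.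
Variables (R : comRingType) (n : nat) (c : 'I_n -> 'I_n -> 'I_n -> R).
Implicit Types (u v : 'I_n -> R).

Lemma lie_br_anti (c_anti : forall a b k, c a b k = - c b a k) u v k :
  lie_br c u v k = - lie_br c v u k.
Proof.
rewrite /lie_br exchange_big -sumrN; apply: eq_bigr => a _.
by rewrite -sumrN; apply: eq_bigr => b _; rewrite c_anti; ring.
Qed.

Lemma lie_brNr u v k : lie_br c u (fun a => - v a) k = - lie_br c u v k.
Proof.
rewrite /lie_br -sumrN; apply: eq_bigr => a _.
by rewrite -sumrN; apply: eq_bigr => b _; ring.
Qed.

Lemma lie_br_sumr (u : 'I_n -> R) (F : 'I_n -> R) p :
  \sum_k lie_br c u (basis_vec R k) p * F k = lie_br c u F p.
Proof.
rewrite /lie_br; under eq_bigr do rewrite mulr_suml.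
rewrite exchange_big; apply: eq_bigr => a _; under eq_bigr do rewrite mulr_suml.
rewrite exchange_big; apply: eq_bigr => b _.
rewrite (bigD1 b) //= /basis_vec eqxx big1 ?addr0 => [|k /negbTE]; last first.
  by rewrite eq_sym => ->; rewrite mulr0 !mul0r.
by rewrite mulr1; ring.
Qed.

Lemma ad_bivE (h : 'I_n -> R) (B : 'I_n -> 'I_n -> R) p q :
  ad_biv c h B p q = lie_br c h (fun k => B k q) p + lie_br c h (B p) q.
Proof.
rewrite /ad_biv lie_br_sumr -[lie_br c h (B p) q]lie_br_sumr; congr (_ + _).
by apply: eq_bigr => k _; rewrite mulrC.
Qed.

Lemma lie_br_suml (m : nat) (y : 'I_m -> R) (h : 'I_m -> 'I_n -> R) v k :
  lie_br c (fun a => \sum_i y i * h i a) v k = \sum_i y i * lie_br c (h i) v k.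
Proof.
rewrite /lie_br; under [RHS]eq_bigr do rewrite mulr_sumr.
rewrite [RHS]exchange_big; apply: eq_bigr => a _; under [RHS]eq_bigr do rewrite mulr_sumr.
rewrite [RHS]exchange_big; apply: eq_bigr => b _.
by rewrite !mulr_suml; apply: eq_bigr => i _; ring.
Qed.

End LieBracket.

Lemma sum_delta (R : pzSemiRingType) m (F : 'I_m -> R) j :
  \sum_i (j == i)%:R * F i = F j.
Proof.
rewrite (bigD1 j) //= eqxx mul1r big1 ?addr0 // => i /negbTE.
by rewrite eq_sym => ->; rewrite mul0r.
Qed.

Lemma zero_weightP (R : realType) (n l : nat) c (hv : 'I_l -> 'I_n -> R) r :
  zero_weight c hv r <-> forall j x p q, ad_biv c (hv j) (r x) p q = 0.
Proof.
split=> [zw j x p q | ad0 y x p q].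
  by have := zw (fun i => (j == i)%:R) x p q; under eq_fun do rewrite sum_delta.
rewrite ad_bivE !lie_br_suml -big_split big1 // => i _.
by rewrite /= -mulrDr -ad_bivE ad0 mulr0.
Qed.

Section Partial.
Variables (R : realType) (l : nat) (i : 'I_l).

Lemma partial_eq_cst (f : 'rV[R]_l -> R) a x :
  (forall y, f y = a) -> partial i f x = 0.
Proof.
by move=> fa; rewrite (_ : f = cst a) ?/partial ?derive_cst //; apply: funext.
Qed.

Lemma partialN (f g : 'rV[R]_l -> R) x :
  (forall y, f y = - g y) -> differentiable g x ->
  partial i f x = - partial i g x.
Proof.
move=> fNg dg; rewrite (_ : f = - g); last exact: funext.
by rewrite /partial deriveN //; apply: diff_derivable.
Qed.

End Partial.

Section SchoutenLambda.
Variables (R : realType) (n l : nat) (c : 'I_n -> 'I_n -> 'I_n -> R).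
Variables (hv : 'I_l -> 'I_n -> R) (r : 'rV[R]_l -> 'I_n -> 'I_n -> R).
Local Notation Aidx := (Aidx n l).
Local Notation Lam := (Lambda hv r).

Lemma sum_Aidx (F : Aidx -> R) :
  \sum_(al : Aidx) F al = \sum_i F (inl i) + \sum_a F (inr a).
Proof. exact: big_sumType. Qed.

Lemma sum_A_anchor (G : Aidx -> R) f x :
  \sum_(al : Aidx) G al * A_anchor al f x = \sum_i G (inl i) * partial i f x.
Proof. by rewrite sum_Aidx [X in _ + X]big1 ?addr0 // => a _; rewrite mulr0. Qed.

Lemma sum_A_struct_T (F : Aidx -> Aidx -> R) j :
  \sum_(al : Aidx) \sum_(ga : Aidx) F al ga * A_struct c al ga (inl j) = 0.
Proof.
by rewrite big1 // => al _; rewrite big1 // => ga _; case: al; case: ga => *;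
  rewrite mulr0.
Qed.

Lemma sum_A_struct_g (F : Aidx -> Aidx -> R) k :
  \sum_(al : Aidx) \sum_(ga : Aidx) F al ga * A_struct c al ga (inr k) =
  \sum_a \sum_b F (inr a) (inr b) * c a b k.
Proof.
rewrite sum_Aidx big1 ?add0r => [|i _]; last first.
  by rewrite big1 // => ga _; rewrite mulr0.
apply: eq_bigr => a _; rewrite sum_Aidx big1 ?add0r // => i _.
by rewrite mulr0.
Qed.

Lemma Lambda_TT x i j : Lam x (inl i) (inl j) = 0.
Proof.
by rewrite /Lambda /wedge2 /= big1 ?addr0 // => k _; rewrite !mul0r subrr.
Qed.

Lemma Lambda_Tg x j a : Lam x (inl j) (inr a) = - hv j a.
Proof.
rewrite /Lambda /wedge2 /= addr0.
by under eq_bigr do rewrite mul0r sub0r mulrC; rewrite sumrN sum_delta.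
Qed.

Lemma Lambda_gT x j a : Lam x (inr a) (inl j) = hv j a.
Proof.
rewrite /Lambda /wedge2 /= addr0.
by under eq_bigr do rewrite mulr0 subr0 mulrC; rewrite sum_delta.
Qed.

Lemma Lambda_gg x a b : Lam x (inr a) (inr b) = r x a b.
Proof.
by rewrite /Lambda /wedge2 /= big1 ?add0r // => k _; rewrite !mulr0 subrr.
Qed.

Definition schouten_density (P Q : 'rV[R]_l -> Aidx -> Aidx -> R) x
    (e b d : Aidx) : R :=
    \sum_(al : Aidx) \sum_(ga : Aidx) P x al b * Q x ga d * A_struct c al ga e
  + 2^-1 * \sum_(al : Aidx) P x al b * A_anchor al (fun y => Q y e d) x
  - 2^-1 * \sum_(ga : Aidx) Q x ga d * A_anchor ga (fun y => P y e b) x.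

Lemma A_schoutenE P Q x p q s :
  A_schouten c P Q x p q s = alt3 (schouten_density P Q x) p q s.
Proof. by []. Qed.

Lemma A_schouten_cycle (P Q : 'rV[R]_l -> Aidx -> Aidx -> R) x p q s :
  A_schouten c P Q x p q s = A_schouten c P Q x q s p.
Proof. exact: alt3_cycle. Qed.

Lemma partial_Lambda_T i x j d : partial i (fun y => Lam y (inl j) d) x = 0.
Proof.
by apply: (@partial_eq_cst _ _ _ _ (Lam x (inl j) d)) => y; case: d => *;
  rewrite ?Lambda_TT ?Lambda_Tg.
Qed.

Lemma partial_Lambda_gT i x k j : partial i (fun y => Lam y (inr k) (inl j)) x = 0.
Proof. by apply: (@partial_eq_cst _ _ _ _ (hv j k)) => y; rewrite Lambda_gT. Qed.

Lemma density_T x j b d : schouten_density Lam Lam x (inl j) b d = 0.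
Proof.
rewrite /schouten_density sum_A_struct_T !sum_A_anchor !big1 => [|i _|i _];
  by rewrite ?partial_Lambda_T !mulr0 ?add0r ?oppr0.
Qed.

Lemma density_ggg x k b d : schouten_density Lam Lam x (inr k) (inr b) (inr d) =
  \sum_a \sum_a' r x a b * r x a' d * c a a' k
  + 2^-1 * \sum_(i < l) (hv i d * partial i (fun y => r y k b) x
                         - hv i b * partial i (fun y => r y k d) x).
Proof.
have Lambda_gg_fun a a' : (fun y => Lam y (inr a) (inr a')) = fun y => r y a a'.
  by apply: funext => y; rewrite Lambda_gg.
rewrite /schouten_density sum_A_struct_g !sum_A_anchor !Lambda_gg_fun.
rewrite -addrA -mulrBr [in RHS]sumrB; congr (_ + _ * _).
  by apply: eq_bigr => a _; apply: eq_bigr => a' _; rewrite !Lambda_gg.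
rewrite addrC; congr (_ + _); rewrite -sumrN; apply: eq_bigr => i _;
  by rewrite Lambda_Tg mulNr ?opprK.
Qed.

Lemma density_ggT x k b j : schouten_density Lam Lam x (inr k) (inr b) (inl j) =
  lie_br c (fun a => r x a b) (hv j) k.
Proof.
rewrite /schouten_density sum_A_struct_g !sum_A_anchor.
rewrite [X in _ + 2^-1 * X]big1 => [|i _]; last by rewrite partial_Lambda_gT mulr0.
rewrite [X in _ - 2^-1 * X]big1 => [|i _]; last by rewrite Lambda_TT mul0r.
rewrite mulr0 subr0 addr0.
by apply: eq_bigr => a _; apply: eq_bigr => a' _; rewrite Lambda_gg Lambda_gT.
Qed.

Lemma density_gTg x k j d : schouten_density Lam Lam x (inr k) (inl j) (inr d) =
  lie_br c (hv j) (fun a => r x a d) k.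
Proof.
rewrite /schouten_density sum_A_struct_g !sum_A_anchor.
rewrite [X in _ + 2^-1 * X]big1 => [|i _]; last by rewrite Lambda_TT mul0r.
rewrite [X in _ - 2^-1 * X]big1 => [|i _]; last by rewrite partial_Lambda_gT mulr0.
rewrite mulr0 subr0 addr0.
by apply: eq_bigr => a _; apply: eq_bigr => a' _; rewrite Lambda_gg Lambda_gT.
Qed.

Lemma density_gTT x k i j : schouten_density Lam Lam x (inr k) (inl i) (inl j) =
  lie_br c (hv i) (hv j) k.
Proof.
rewrite /schouten_density sum_A_struct_g !sum_A_anchor.
rewrite [X in _ + 2^-1 * X]big1 => [|i' _]; last by rewrite Lambda_TT mul0r.
rewrite [X in _ - 2^-1 * X]big1 => [|i' _]; last by rewrite Lambda_TT mul0r.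
rewrite mulr0 subr0 addr0.
by apply: eq_bigr => a _; apply: eq_bigr => a' _; rewrite !Lambda_gT.
Qed.

Hypothesis c_anti : forall a b k, c a b k = - c b a k.
Hypothesis r_anti : forall x a b, r x a b = - r x b a.
Hypothesis r_smooth : forall a b, smooth (fun x => r x a b).

Lemma schouten_Lambda_ggg x p q s :
  A_schouten c Lam Lam x (inr p) (inr q) (inr s) =
  2 * (\sum_i wedge12 (hv i) (fun a b => partial i (fun y => r y a b) x) p q s
       + 2^-1 * lie_schouten c (r x) (r x) p q s).
Proof.
have partial_r_anti i a b : partial i (fun y => r y a b) x =
                            - partial i (fun y => r y b a) x.
  by apply: partialN => [y|]; [exact: r_anti | exact: (r_smooth b a [::] x)].
rewrite A_schoutenE (_ : alt3 _ _ _ _ =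
  alt3 (fun k b d => schouten_density Lam Lam x (inr k) (inr b) (inr d)) p q s) //.
rewrite (eq_alt3 (density_ggg x)) alt3D alt3Z.
rewrite -[alt3 _ p q s + _]/(lie_schouten c (r x) (r x) p q s + _) alt3_sum.
rewrite (eq_bigr (fun i => 4 * wedge12 (hv i)
                     (fun a b => partial i (fun y => r y a b) x) p q s)).
  by rewrite -mulr_sumr; field.
by move=> i _; apply: alt3_wedge12 => a b; apply: partial_r_anti.
Qed.

Lemma schouten_Lambda_Tgg x j q s :
  A_schouten c Lam Lam x (inl j) (inr q) (inr s) = -2 * ad_biv c (hv j) (r x) q s.
Proof.
rewrite A_schoutenE /alt3 !density_T density_ggT !density_gTg density_ggT ad_bivE.
rewrite !(lie_br_anti c_anti (fun a => r x a _)).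
have -> a : r x a = fun b => - r x b a by apply: funext => b; rewrite r_anti.
by rewrite !lie_brNr; ring.
Qed.

Lemma schouten_Lambda_TTg x i j s :
  A_schouten c Lam Lam x (inl i) (inl j) (inr s) = 2 * lie_br c (hv i) (hv j) s.
Proof.
by rewrite A_schoutenE /alt3 !density_T !density_gTT (lie_br_anti c_anti (hv j)); ring.
Qed.

Lemma schouten_Lambda_TTT x i j k :
  A_schouten c Lam Lam x (inl i) (inl j) (inl k) = 0.
Proof. by rewrite A_schoutenE /alt3 !density_T; ring. Qed.

Lemma schouten_Lambda_eq0P :
  (forall i j k, lie_br c (hv i) (hv j) k = 0) ->
  (forall x p q s, A_schouten c Lam Lam x p q s = 0) <->
  (forall j x q s, ad_biv c (hv j) (r x) q s = 0) /\ CDYBE c hv r.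
Proof.
move=> h_abelian; split=> [Lam0 | [ad0 cdybe] x p q s].
  split=> [j x q s | x p q s].
    have /eqP := Lam0 x (inl j) (inr q) (inr s).
    by rewrite schouten_Lambda_Tgg mulf_eq0 oppr_eq0 pnatr_eq0 => /eqP.
  have /eqP := Lam0 x (inr p) (inr q) (inr s).
  by rewrite schouten_Lambda_ggg mulf_eq0 pnatr_eq0 => /eqP.
have TTg i j a : A_schouten c Lam Lam x (inl i) (inl j) (inr a) = 0.
  by rewrite schouten_Lambda_TTg h_abelian mulr0.
have Tgg j a b : A_schouten c Lam Lam x (inl j) (inr a) (inr b) = 0.
  by rewrite schouten_Lambda_Tgg ad0 mulr0.
move: p q s => [i|p] [j|q] [k|s].
- exact: schouten_Lambda_TTT.
- exact: TTg.
- by rewrite 2!A_schouten_cycle TTg.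
- exact: Tgg.
- by rewrite A_schouten_cycle TTg.
- by rewrite A_schouten_cycle Tgg.
- by rewrite 2!A_schouten_cycle Tgg.
- by rewrite schouten_Lambda_ggg cdybe mulr0.
Qed.

End SchoutenLambda.

Theorem proposition2p1 (R : realType) (n l : nat)
  (c : 'I_n -> 'I_n -> 'I_n -> R) (hv : 'I_l -> 'I_n -> R)
  (r : 'rV[R]_l -> 'I_n -> 'I_n -> R) :
  is_lie_algebra c ->
  abelian_subalgebra_basis c hv ->
  smooth_biv r ->
  (triangular_dynamical_r_matrix c hv r <->
   (forall x p q s, A_schouten c (Lambda hv r) (Lambda hv r) x p q s = 0)).
Proof.
move=> [c_anti _] [_ h_abelian] [r_anti r_smooth].
have Lambda_eq0P := schouten_Lambda_eq0P c_anti r_anti r_smooth h_abelian.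
split=> [[_ [zw cdybe]] | /Lambda_eq0P [ad0 cdybe]].
  by apply/Lambda_eq0P; split=> //; apply/zero_weightP.
by split; [split | split=> //; apply/zero_weightP].
Qed.
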